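(* Let $\mathcal F$ be a family of finite graphs and let $\mathrm{Forb}^+_{T_{\mathrm{Graph}}}(\mathcal F)$ be the theory of all graphs that contain no non-induced copy of any member of $\mathcal F$. For the axiom-adding interpretation $I^+_{\mathcal F}\colon T_{\mathrm{Graph}}\leadsto\mathrm{Forb}^+_{T_{\mathrm{Graph}}}(\mathcal F)$ (acting identically on $E$), we have $$\chi(I^+_{\mathcal F})=\max\{\chi(\mathcal F),1\},$$ where $\chi(\mathcal F)=\inf\{\chi(F):F\in\mathcal F\}$ (the infimum of the usual chromatic numbers, $\inf\varnothing=\infty$).
   Context: A graph $G$ contains a non-induced copy of $F$ ($F\subseteq G$) if there is an injection $V(F)\to V(G)$ mapping edges to edges. For the interpretation $I=I^+_{\mathcal F}$ and $T=\mathrm{Forb}^+_{T_{\mathrm{Graph}}}(\mathcal F)$, $I(N)=N$ and the abstract chromatic number is $\chi(I)=\sup(\{\ell\in\mathbb{N}_+:\forall n\in\mathbb{N}\ \exists N\in\mathcal M_n[T],\ T_{n,\ell}\subseteq I(N)\}\cup\{0\})+1$, where $\mathcal M_n[T]$ is the set of $n$-vertex models of $T$ up to isomorphism and $T_{n,\ell}$ is the complete $\ell$-partite graph on $n$ vertices with parts of sizes $\lfloor n/\ell\rfloor$ or $\lceil n/\ell\rceil$. *)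

From HB Require Import structures.
From mathcomp Require Import all_boot all_order all_algebra.
From mathcomp Require Import boolp classical_sets reals constructive_ereal ereal.
Set Implicit Arguments. Unset Strict Implicit. Unset Printing Implicit Defensive.
Import Order.TTheory GRing.Theory Num.Theory.
Local Open Scope classical_set_scope.

Record sgraph := FGraph {
  fg_n : nat;
  fg_adj : rel 'I_fg_n;
  fg_sym : symmetric fg_adj;
  fg_irr : irreflexive fg_adj }.

Definition subgraph (n m : nat) (a : rel 'I_n) (b : rel 'I_m) : Prop :=
  exists f : 'I_n -> 'I_m, injective f /\ forall x y, a x y -> b (f x) (f y).

(* An n-vertex model of Forb^+_{T_Graph}(Fam): a simple graph on 'I_n
   containing no non-induced copy of any member of Fam. *)
Definition forb_model (Fam : sgraph -> Prop) (n : nat) (a : rel 'I_n) : Prop :=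
  [/\ symmetric a, irreflexive a & forall F, Fam F -> ~ @subgraph (fg_n F) n (@fg_adj F) a].

(* Turan graph T_{n,l}: parts are residue classes mod l (sizes floor/ceil n/l). *)
Definition turan (n l : nat) : rel 'I_n := fun x y => (x %% l != y %% l)%N.

Definition chiI_set (Fam : sgraph -> Prop) : set nat :=
  [set l | (0 < l)%N /\ forall n, exists a : rel 'I_n, forb_model Fam a /\ @subgraph n n (@turan n l) a].

Definition chiI (R : realType) (Fam : sgraph -> Prop) : \bar R :=
  (ereal_sup ([set (l%:R)%:E | l in chiI_set Fam] `|` [set 0%E]) + 1)%E.

Definition colorable (n : nat) (a : rel 'I_n) (k : nat) : bool :=
  [exists f : {ffun 'I_n -> 'I_k}, [forall x, [forall y, a x y ==> (f x != f y)]]].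

Lemma colorable_self (G : sgraph) : exists k, @colorable (fg_n G) (@fg_adj G) k.
Proof.
exists (fg_n G); apply/existsP; exists [ffun x => x].
apply/forallP => x; apply/forallP => y; apply/implyP => hxy; rewrite !ffunE.
by apply/eqP => exy; move: hxy; rewrite exy (@fg_irr G).
Qed.

Definition chromatic (G : sgraph) : nat := ex_minn (@colorable_self G).

Definition chiF (R : realType) (Fam : sgraph -> Prop) : \bar R :=
  ereal_inf [set ((chromatic G)%:R)%:E | G in Fam].

From HB Require Import structures.
From mathcomp Require Import all_boot all_order all_algebra.
From mathcomp Require Import boolp classical_sets reals constructive_ereal ereal.
Set Implicit Arguments. Unset Strict Implicit. Unset Printing Implicit Defensive.
Import Order.TTheory GRing.Theory Num.Theory.
Local Open Scope classical_set_scope.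

(* The combinatorial heart is a characterisation of the set
   [chiI_set Fam]: an integer l >= 1 belongs to it iff l < chromatic G for
   every G in Fam.
   - If l < chromatic G for all G in Fam, the Turan graph T_{n,l} itself is a
     model of the forbidden-subgraph theory, since it is l-colourable (colour
     a vertex by its residue mod l) and every subgraph of an l-colourable
     graph is l-colourable.
   - Conversely, if chromatic G <= l for some G in Fam, a proper
     (chromatic G)-colouring of G embeds G into T_{m*l,l} (vertex v with
     colour c goes to v*l + c), so no model on m*l vertices contains T_{m*l,l}.
   Hence [chiI_set Fam] is {1, ..., k-1} where k is the least chromatic
   number of a member of Fam, or all of {1, 2, ...} when Fam is empty.  The
   theorem then reduces to computing the supremum of an initial segment of
   the naturals (k-1, resp. +oo) and the infimum of the chromatic numbers
   (k, resp. +oo) in the extended reals. *)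

Lemma chromatic_colorable (G : sgraph) : colorable (@fg_adj G) (chromatic G).
Proof. by rewrite /chromatic; case: ex_minnP. Qed.

Lemma chromatic_min (G : sgraph) k :
  colorable (@fg_adj G) k -> (chromatic G <= k)%N.
Proof. by rewrite /chromatic; case: ex_minnP => m _ minm /minm. Qed.

Lemma subgraph_trans n m p (a : rel 'I_n) (b : rel 'I_m) (c : rel 'I_p) :
  subgraph a b -> subgraph b c -> subgraph a c.
Proof.
move=> [f [f_inj f_edge]] [g [g_inj g_edge]]; exists (g \o f).
by split; [exact: inj_comp | move=> x y /f_edge /g_edge].
Qed.

Lemma turan_sym n l : symmetric (@turan n l).
Proof. by move=> x y; rewrite /turan eq_sym. Qed.

Lemma turan_irr n l : irreflexive (@turan n l).
Proof. by move=> x; rewrite /turan eqxx. Qed.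

(* Any graph with a copy in T_{m,l} is l-colourable: colour by residue mod l. *)
Lemma sub_turan_colorable n m (a : rel 'I_n) l : (0 < l)%N ->
  subgraph a (@turan m l) -> colorable a l.
Proof.
move=> l_gt0 [f [_ f_edge]]; apply/existsP.
exists [ffun x => Ordinal (ltn_pmod (f x) l_gt0)].
apply/forallP => x; apply/forallP => y; apply/implyP => axy; rewrite !ffunE.
by have := f_edge _ _ axy; rewrite /turan; apply: contra => /eqP [->].
Qed.

(* A k-colourable graph on m vertices has a copy in T_{m*l,l} when k <= l:
   send vertex v of colour c to v*l + c, whose residue mod l is c. *)
Lemma colorable_sub_turan m (a : rel 'I_m) k l : colorable a k -> (k <= l)%N ->
  subgraph a (@turan (m * l) l).
Proof.
move=> /existsP [c /forallP c_proper] kl.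
have c_lt : forall v, (c v < l)%N by move=> v; exact: leq_trans (ltn_ord _) kl.
have code_lt : forall v : 'I_m, (v * l + c v < m * l)%N.
  move=> v; apply: (@leq_trans (v.+1 * l)); first by rewrite mulSn addnC ltn_add2r.
  by rewrite leq_mul2r ltn_ord orbT.
have code_mod : forall v : 'I_m, (v * l + c v) %% l = c v.
  by move=> v; rewrite modnMDl modn_small.
have code_div : forall v : 'I_m, (v * l + c v) %/ l = v.
  by move=> v; rewrite divnMDl ?(leq_ltn_trans _ (c_lt v)) // divn_small // addn0.
exists (fun v => Ordinal (code_lt v)); split.
  by move=> u v [] e; apply: val_inj; rewrite /= -(code_div u) -(code_div v) e.
move=> x y axy; rewrite /turan /= !code_mod.
by have /forallP /(_ y) /implyP /(_ axy) := c_proper x.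
Qed.

Lemma chiI_setE (Fam : sgraph -> Prop) :
  chiI_set Fam = [set l | (0 < l)%N /\ forall G, Fam G -> (l < chromatic G)%N].
Proof.
apply/seteqP; split => l [l_gt0 Hl]; split => //.
  move=> G FG; rewrite ltnNge; apply/negP => chi_le.
  have [a [[_ _ a_forb] T_in_a]] := Hl (fg_n G * l)%N.
  apply: (a_forb G FG); apply: subgraph_trans T_in_a.
  exact: colorable_sub_turan (chromatic_colorable G) chi_le.
move=> n; exists (@turan n l); split; last by exists id; split.
split; [exact: turan_sym | exact: turan_irr |].
move=> F FF /(sub_turan_colorable l_gt0) /chromatic_min.
by rewrite leqNgt Hl.
Qed.

Lemma ereal_sup_initial_segment (R : realType) (k : nat) :
  ereal_sup ([set (l%:R)%:E | l in [set l | (0 < l < k)%N]] `|` [set 0%E])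
  = ((k.-1)%:R)%:E :> \bar R.
Proof.
apply/eqP; rewrite eq_le; apply/andP; split.
  apply/ereal_supP => y [[l /andP [_ lk] <-]|->]; rewrite lee_fin //.
  by rewrite ler_nat -ltnS (ltn_predK lk).
apply: ereal_sup_ubound; case: k => [|[|k]] /=; try by right.
by left; exists k.+1; rewrite ?ltnSn.
Qed.

Lemma ereal_sup_positive_nat (R : realType) :
  ereal_sup ([set (l%:R)%:E | l in [set l | (0 < l)%N]] `|` [set 0%E])
  = +oo%E :> \bar R.
Proof.
set S := (X in ereal_sup X).
have S_nat : forall l, (0 < l)%N -> S (l%:R)%:E by move=> l l_gt0; left; exists l.
case E: (ereal_sup S) => [r| |] //; last first.
  by have := ereal_sup_ubound (S_nat 1%N erefl); rewrite E.
pose l := (Num.bound `|r|).+1.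
have := ereal_sup_ubound (S_nat l erefl); rewrite E lee_fin => l_le_r.
have r_lt_l : (`|r| < l%:R)%R.
  by apply: lt_le_trans (archi_boundP (normr_ge0 r)) _; rewrite ler_nat.
by have := le_lt_trans (ler_norm r) r_lt_l; rewrite ltNge l_le_r.
Qed.

Lemma least_chromatic (Fam : sgraph -> Prop) : (exists G, Fam G) ->
  exists k, (exists2 G, Fam G & chromatic G = k) /\
            forall G, Fam G -> (k <= chromatic G)%N.
Proof.
move=> [G FG].
pose P k := `[< exists2 G, Fam G & chromatic G = k >].
have exP : exists k, P k by exists (chromatic G); apply/asboolP; exists G.
case: (ex_minnP exP) => k /asboolP attained k_min; exists k; split => //.
by move=> G' FG'; apply: k_min; apply/asboolP; exists G'.
Qed.

Lemma chiF_least (R : realType) (Fam : sgraph -> Prop) (k : nat) :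
  (exists2 G, Fam G & chromatic G = k) ->
  (forall G, Fam G -> (k <= chromatic G)%N) -> chiF R Fam = (k%:R)%:E.
Proof.
move=> [G0 FG0 <-] k_min; apply/eqP; rewrite eq_le; apply/andP; split.
  by apply: ereal_inf_lbound; exists G0.
by apply/ereal_infP => y [G FG <-]; rewrite lee_fin ler_nat k_min.
Qed.

Lemma chiF_empty (R : realType) (Fam : sgraph -> Prop) :
  (forall G, ~ Fam G) -> chiF R Fam = +oo%E.
Proof. by move=> noF; apply/ereal_inf_pinfty => x [G /noF]. Qed.

Lemma chiI_set_least (Fam : sgraph -> Prop) (k : nat) :
  (exists2 G, Fam G & chromatic G = k) ->
  (forall G, Fam G -> (k <= chromatic G)%N) ->
  chiI_set Fam = [set l | (0 < l < k)%N].
Proof.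
move=> [G0 FG0 <-] k_min; rewrite chiI_setE.
apply/seteqP; split => l /=; first by case=> -> /(_ G0 FG0).
by case/andP => l_gt0 l_lt; split => // G /k_min; exact: leq_trans.
Qed.

Lemma chiI_set_empty (Fam : sgraph -> Prop) :
  (forall G, ~ Fam G) -> chiI_set Fam = [set l | (0 < l)%N].
Proof.
move=> noF; rewrite chiI_setE; apply/seteqP; split => l /=; first by case.
by move=> l_gt0; split => // G /noF.
Qed.

Theorem proposition8p1 (R : realType) (Fam : sgraph -> Prop) :
  chiI R Fam = Order.max (chiF R Fam) 1%E.
Proof.
rewrite /chiI.
have [/least_chromatic [k [attained k_min]]|noF] := pselect (exists G, Fam G).
  rewrite (chiF_least R attained k_min) (chiI_set_least attained k_min).
  rewrite ereal_sup_initial_segment; case: k {attained k_min} => [|k] /=.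
    by rewrite add0e max_r // lee_fin.
  by rewrite max_l ?lee_fin ?ler1n // -EFinD -natr1.
have noG : forall G, ~ Fam G by move=> G FG; apply: noF; exists G.
rewrite chiF_empty // chiI_set_empty // ereal_sup_positive_nat.
by rewrite max_l ?leey.
Qed.
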